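(* Let $P:\{-1,1\}^k\to\{0,1\}$ be a predicate and $Q:\{-1,1\}^k\to\mathbb{R}$. Then $P$ is information-theoretically useless for $Q$ if and only if there exists a probability measure $\mu$ on $\{-1,1\}^k$ supported on $P^{-1}(1)$ such that $\mathrm{Opt}(Q,\mu)=E_Q$.
   Context: Boolean values are encoded as $\pm1$. An instance of Max-$P$ on variables $x_1,\dots,x_n$ consists of $m$ constraints; constraint $j$ is given by indices $a_j^1,\dots,a_j^k\in[n]$, pairwise distinct within the constraint, and signs $b_j^1,\dots,b_j^k\in\{-1,1\}$. For $x\in\{-1,1\}^n$, $x_{a_j}^{b_j}\in\{-1,1\}^k$ denotes the string with $i$-th coordinate $b_j^i x_{a_j^i}$. $E_Q=\mathbb{E}_{x\in\{-1,1\}^k}[Q(x)]$ for uniform $x$. $P$ is information-theoretically useless for $Q$ if for every $\epsilon>0$ there is an instance with $\max_x\frac1m\sum_j P(x_{a_j}^{b_j})=1$ and $\max_x\frac1m\sum_j Q(x_{a_j}^{b_j})\le E_Q+\epsilon$. For a probability measure $\mu$ on $\{-1,1\}^k$ and $p\in[0,1]$, $\mu^p$ is the distribution obtained by sampling a string from $\mu$ and then independently flipping each coordinate with probability $p$. $\mathrm{Opt}(Q,\mu)=\max_{p\in[0,1]}\mathbb{E}_{x\sim\mu^p}[Q(x)]$. *)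

From mathcomp Require Import all_boot all_order all_algebra.
From mathcomp Require Import reals.
Set Implicit Arguments. Unset Strict Implicit. Unset Printing Implicit Defensive.
Import Order.TTheory GRing.Theory Num.Theory.
Local Open Scope ring_scope.

(* Boolean values +-1 are encoded as bool: false = +1, true = -1.
   Multiplication of +-1 values is then xor (addb). *)
Definition bstr (k : nat) := {ffun 'I_k -> bool}.

Definition lit (k n : nat) (a : 'I_k -> 'I_n) (b : 'I_k -> bool)
  (x : {ffun 'I_n -> bool}) : bstr k := [ffun i => b i (+) x (a i)].

Definition frac_val (R : realType) (k n m : nat) (F : bstr k -> R)
  (a : 'I_m -> 'I_k -> 'I_n) (b : 'I_m -> 'I_k -> bool)
  (x : {ffun 'I_n -> bool}) : R :=
  (m%:R)^-1 * \sum_(j < m) F (lit (a j) (b j) x).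

Definition is_max_fin (R : realType) (T : finType) (f : T -> R) (v : R) : Prop :=
  (exists x, f x = v) /\ (forall x, f x <= v).

Definition EQ (R : realType) (k : nat) (Q : bstr k -> R) : R :=
  (2 ^ k)%:R^-1 * \sum_(x : bstr k) Q x.

Definition useless (R : realType) (k : nat) (P : bstr k -> bool) (Q : bstr k -> R) : Prop :=
  forall eps : R, 0 < eps ->
  exists (n m : nat) (a : 'I_m -> 'I_k -> 'I_n) (b : 'I_m -> 'I_k -> bool),
    [/\ (0 < m)%N,
        (forall j, injective (a j)),
        is_max_fin (frac_val (fun s => (P s)%:R : R) a b) 1
      & exists v, is_max_fin (frac_val Q a b) v /\ v <= EQ Q + eps].

Definition prob_on (R : realType) (k : nat) (P : bstr k -> bool) (mu : bstr k -> R) : Prop :=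
  [/\ forall x, 0 <= mu x, \sum_(x : bstr k) mu x = 1 & forall x, mu x != 0 -> P x].

(* mu^p: sample from mu, flip each coordinate independently with probability p *)
Definition noisy (R : realType) (k : nat) (mu : bstr k -> R) (p : R) (y : bstr k) : R :=
  \sum_(x : bstr k) mu x * \prod_(i < k) (if x i == y i then 1 - p else p).

Definition E_noisy (R : realType) (k : nat) (Q : bstr k -> R) (mu : bstr k -> R) (p : R) : R :=
  \sum_(y : bstr k) noisy mu p y * Q y.

Definition Opt_is (R : realType) (k : nat) (Q : bstr k -> R) (mu : bstr k -> R) (v : R) : Prop :=
  (exists p, 0 <= p <= 1 /\ E_noisy Q mu p = v) /\
  (forall p, 0 <= p <= 1 -> E_noisy Q mu p <= v).

(* If P is useless for Q, fix for eps > 0 an instance of P-value 1 and Q-value at most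
   E_Q + eps, and a satisfying assignment x. Let mu_eps be the distribution of the local
   strings of x on the constraints. Since every constraint reads distinct variables,
   flipping each variable of x with probability p turns mu_eps into mu_eps^p, so
   E_{mu_eps^p} Q is an average of Q-values of assignments and is at most E_Q + eps.
   A cluster point mu of the mu_eps (the simplex is compact) is supported on P^{-1}(1)
   and has Opt(Q, mu) <= E_Q; p = 1/2 gives equality.
   Conversely, approximate mu by rational weights C_s / M and put C_s copies of the
   constraint with signs s on every injective k-tuple of n variables. The all-(+1)
   assignment satisfies every constraint. If x has a fraction p of (-1)'s, a uniformly
   random k-tuple of variables sees x as s with each coordinate flipped independently
   with probability p, and injective tuples are all but a k^2/n fraction of the tuples;
   so the Q-value of x is at most E_{mu^p} Q + eps <= E_Q + eps for n large. *)

From mathcomp Require Import all_boot all_order all_algebra.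
From mathcomp Require Import reals ring lra.
From mathcomp Require Import mathcomp_extra boolp classical_sets topology normedtype.
Import Order.TTheory GRing.Theory Num.Theory.
Local Open Scope ring_scope.
Set Implicit Arguments. Unset Strict Implicit. Unset Printing Implicit Defensive.

Lemma sum_eq_indicator (R : nzRingType) (T : finType) (z : T) (F : T -> R) :
  \sum_y (z == y)%:R * F y = F z.
Proof.
rewrite (bigD1 z) //= eqxx mul1r big1 ?addr0 // => y /negPf.
by rewrite eq_sym => ->; rewrite mul0r.
Qed.

Lemma natr_eq_ffun (R : comNzRingType) (I : finType) (J : eqType) (f g : {ffun I -> J}) :
  (f == g)%:R = \prod_i (f i == g i)%:R :> R.
Proof.
have [->|neq_fg] := eqVneq f g; first by rewrite big1 // => i _; rewrite eqxx.
have [i neq_i|all_eq] := pickP (fun i => f i != g i).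
  by rewrite (bigD1 i) //= (negPf neq_i) mul0r.
by case/eqP: neq_fg; apply/ffunP => i; apply/eqP/negbFE/all_eq.
Qed.

Lemma prod_pick_inj (R : comNzRingType) (I J : finType) (a : I -> J) (F : I -> R) :
  injective a ->
  \prod_v (if [pick i | a i == v] is Some i then F i else 1) = \prod_i F i.
Proof.
move=> inj_a; rewrite (bigID (mem (a @: setT))) /= [X in _ * X]big1 ?mulr1; last first.
  move=> v /negP v_out; case: pickP => // i /eqP ai_v.
  by case: v_out; rewrite -ai_v imset_f ?in_setT.
rewrite big_imset /=; last by move=> i j _ _ /inj_a.
rewrite (eq_bigl predT) => [|i]; last by rewrite in_setT.
apply: eq_bigr => i _; case: pickP => [j /eqP/inj_a -> // | no_i].
by have := no_i i; rewrite eqxx.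
Qed.

Lemma sum_prod_ffun_marginal (R : comNzRingType) (I J T : finType) (a : I -> J)
    (g : J -> T -> R) (c : I -> T) :
  injective a -> (forall v, \sum_t g v t = 1) ->
  \sum_(z : {ffun J -> T}) (\prod_v g v (z v)) * \prod_i (z (a i) == c i)%:R =
  \prod_i g (a i) (c i).
Proof.
move=> inj_a g1.
pose h v t := if [pick i | a i == v] is Some i then (t == c i)%:R else 1 : R.
have prod_h (z : {ffun J -> T}) : \prod_i (z (a i) == c i)%:R = \prod_v h v (z v).
  rewrite -(prod_pick_inj (fun i => (z (a i) == c i)%:R) inj_a).
  by apply: eq_bigr => v _; rewrite /h; case: pickP => // i /eqP ->.
rewrite (eq_bigr (fun z : {ffun J -> T} => \prod_v (g v (z v) * h v (z v)))) => [|z _]; last first.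
  by rewrite prod_h -big_split.
rewrite -(bigA_distr_bigA (fun v t => g v t * h v t)) /=.
rewrite -(prod_pick_inj (fun i => g (a i) (c i)) inj_a); apply: eq_bigr => v _.
rewrite /h; case: pickP => [i /eqP <- | _]; last by under eq_bigr do rewrite mulr1.
by under eq_bigr do rewrite mulrC eq_sym; rewrite sum_eq_indicator.
Qed.

Lemma sum_sub_le_mean (R : realFieldType) (T : finType) (A : {pred T}) (F : T -> R) (B : R) :
  (0 < #|A|)%N -> (forall t, `|F t| <= B) ->
  \sum_(t in A) F t <=
  #|A|%:R * (#|T|%:R^-1 * \sum_t F t + 2 * B * (1 - #|A|%:R / #|T|%:R)).
Proof.
move=> A_gt0 le_B.
set X := \sum_(t in A) F t; set D := \sum_(t in [predC A]) F t.
set I : R := #|A|%:R; set J : R := #|[predC A]|%:R.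
have I_gt0 : 0 < I by rewrite ltr0n.
have -> : \sum_t F t = X + D by rewrite (bigID (mem A)).
have -> : #|T|%:R = I + J :> R by rewrite -natrD cardC.
have sum_le (S : {pred T}) : `|\sum_(t in S) F t| <= B * #|S|%:R.
  rewrite -sum1_card natr_sum mulr_sumr.
  by apply: le_trans (ler_norm_sum _ _ _) _; apply: ler_sum => t _; rewrite mulr1.
have X_le : J * X <= J * (B * I) by rewrite ler_wpM2l // (le_trans (ler_norm X)) ?sum_le.
have D_ge : I * (- D) <= I * (B * J).
  rewrite ler_wpM2l ?(ltW I_gt0) //; apply: le_trans (ler_norm (- D)) _.
  by rewrite normrN sum_le.
have IJ_gt0 : 0 < I + J by rewrite ltr_wpDr.
have -> : I * ((I + J)^-1 * (X + D) + 2 * B * (1 - I / (I + J))) =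
    (I * (X + D) + 2 * B * I * J) / (I + J) by field; rewrite lt0r_neq0.
rewrite ler_pdivlMr //; nra.
Qed.

Lemma one_sub_sum_le_prod (R : realDomainType) k (a : 'I_k -> R) :
  (forall i, 0 <= a i <= 1) -> 1 - \sum_i a i <= \prod_i (1 - a i).
Proof.
elim: k a => [|k IHk] a a01; first by rewrite !big_ord0 subr0.
rewrite big_ord_recr big_ord_recr /=.
have := IHk (fun i => a (widen_ord (leqnSn k) i)) (fun i => a01 _).
set S := \sum_(i < k) _; set P := \prod_(i < k) _; move=> IH.
have /andP[a0 a1] := a01 ord_max.
have S_ge0 : 0 <= S by apply: sumr_ge0 => i _; case/andP: (a01 (widen_ord (leqnSn k) i)).
nra.
Qed.

Lemma birthday_bound (R : realFieldType) n k : (0 < n)%N -> (k <= n)%N ->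
  1 - (n ^_ k)%:R / n%:R ^+ k <= (k * k)%:R / n%:R :> R.
Proof.
move=> n_gt0 le_kn; have n_pos : (0 : R) < n%:R by rewrite ltr0n.
pose a (i : 'I_k) : R := i%:R / n%:R.
have -> : (n ^_ k)%:R / n%:R ^+ k = \prod_i (1 - a i).
  rewrite -[in n%:R ^+ k](card_ord k) -prodr_const ffact_prod natr_prod -prodf_div.
  apply: eq_bigr => i _; rewrite natrB ?mulrBl ?divff ?gt_eqF //.
  exact: leq_trans (ltnW (ltn_ord i)) le_kn.
have a01 i : 0 <= a i <= 1.
  rewrite divr_ge0 ?ler0n //= ler_pdivrMr // mul1r ler_nat.
  exact: leq_trans (ltnW (ltn_ord i)) le_kn.
apply: le_trans (_ : \sum_i a i <= _).
  by rewrite lerBlDl -lerBlDr one_sub_sum_le_prod.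
rewrite natrM -mulrA -[X in X%:R * _](card_ord k) mulr_natl -sumr_const.
by apply: ler_sum => i _; rewrite ler_pM2r ?invr_gt0 // ler_nat ltnW.
Qed.

Lemma card_inj_ffun_ord k n : #|[pred a : {ffun 'I_k -> 'I_n} | injectiveb a]| = n ^_ k.
Proof.
transitivity #|[set a : {ffun 'I_k -> 'I_n} | injectiveb a]|.
  by apply: eq_card => a; rewrite finset.inE.
by rewrite card_inj_ffuns !card_ord.
Qed.

Lemma sum_mul_le_l1 (R : realDomainType) (T : finType) (w mu G : T -> R) (d B : R) :
  0 <= B -> (forall t, `|G t| <= B) -> \sum_t `|w t - mu t| <= d ->
  \sum_t w t * G t <= \sum_t mu t * G t + d * B.
Proof.
move=> B_ge0 le_B le_d; rewrite addrC -lerBlDr -sumrB.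
apply: le_trans (_ : \sum_t `|w t - mu t| * B <= _); last by rewrite -mulr_suml ler_wpM2r.
apply: ler_sum => t _; rewrite -mulrBl (le_trans (ler_norm _)) // normrM.
by rewrite ler_wpM2l.
Qed.

Lemma rational_approx (R : realType) (T : finType) (mu : T -> R) (d : R) :
  (forall t, 0 <= mu t) -> \sum_t mu t = 1 -> 0 < d ->
  exists C : T -> nat, [/\ forall t, (0 < C t)%N -> mu t != 0, (0 < \sum_t C t)%N &
    \sum_t `|(C t)%:R / (\sum_u C u)%:R - mu t| <= d].
Proof.
move=> mu_ge0 mu1 d_gt0; set K : R := #|T|%:R.
(* Rounding [N * mu] down loses at most [K] of the total mass [N], and [2 K / N <= d]. *)
set N := (Num.truncn (2 * K / d + K)).+1.
have N_gt : 2 * K / d + K < N%:R by apply: truncnS_gt.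
pose C t := Num.truncn (N%:R * mu t).
have C_itv t : (C t)%:R <= N%:R * mu t < (C t)%:R + 1.
  by rewrite natr1; apply: truncn_itv; rewrite mulr_ge0.
set M : R := (\sum_t C t)%:R.
have sumN : \sum_t N%:R * mu t = N%:R by rewrite -mulr_sumr mu1 mulr1.
have M_le : M <= N%:R.
  by rewrite /M natr_sum -sumN ler_sum // => t _; case/andP: (C_itv t).
have N_le : N%:R - M <= K.
  rewrite /M /K natr_sum -sumN -sumrB -sum1_card natr_sum ler_sum // => t _.
  by case/andP: (C_itv t) => _ /ltW; rewrite lerBlDr addrC.
have K_ge0 : 0 <= K by [].
have Kd_ge0 : 0 <= 2 * K / d by rewrite divr_ge0 ?mulr_ge0 // ltW.
have M_gt0 : 0 < M by lra.
have N_gt0 : 0 < N%:R :> R by lra.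
exists C; split.
- by move=> t; rewrite truncn_gt0; apply: contraTneq => ->; rewrite mulr0 ler10.
- by rewrite -(ltr0n R).
rewrite -/M; apply: le_trans (_ : 2 * (N%:R - M) / N%:R <= _); last first.
  have : 2 * K < N%:R * d by rewrite -ltr_pdivrMr //; lra.
  rewrite ler_pdivrMr //; nra.
have -> : 2 * (N%:R - M) / N%:R =
    \sum_t ((C t)%:R * (M^-1 - N%:R^-1) + (N%:R * mu t - (C t)%:R) / N%:R).
  rewrite big_split /= -!mulr_suml sumrB sumN -natr_sum -/M; field.
  by rewrite !lt0r_neq0.
apply: ler_sum => t _; have /andP[C_le _] := C_itv t.
have -> : (C t)%:R / M - mu t =
    (C t)%:R * (M^-1 - N%:R^-1) - (N%:R * mu t - (C t)%:R) / N%:R.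
  by field; rewrite !lt0r_neq0.
apply: le_trans (ler_normB _ _) _.
by rewrite !ger0_norm ?divr_ge0 ?mulr_ge0 ?subr_ge0 ?lef_pV2 ?posrE.
Qed.

Lemma is_max_fin_exists (R : realType) (T : finType) (f : T -> R) (x0 : T) :
  exists v, is_max_fin f v.
Proof.
have [x _ x_max] := @arg_maxP _ _ T x0 predT f isT.
by exists (f x); split; [exists x | move=> y; apply: x_max].
Qed.

(** * The noise operator *)

Section NoiseOperator.
Variables (R : realType) (k : nat).
Implicit Types (p : R) (s y : bstr k) (Q : bstr k -> R) (mu : bstr k -> R).

Definition flip_kernel p s y : R :=
  \prod_(i < k) (if s i == y i then 1 - p else p).

Definition noise_op Q p s : R := \sum_y flip_kernel p s y * Q y.

Lemma sum_flip_kernel p s : \sum_y flip_kernel p s y = 1.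
Proof.
rewrite /flip_kernel -(bigA_distr_bigA (fun i b => if s i == b then 1 - p else p)).
by rewrite big1 // => i _; rewrite big_bool; case: (s i) => /=; rewrite ?subrK // addrC subrK.
Qed.

Lemma flip_kernel_ge0 p s y : 0 <= p <= 1 -> 0 <= flip_kernel p s y.
Proof.
by case/andP=> p0 p1; apply: prodr_ge0 => i _; case: ifP; rewrite ?subr_ge0.
Qed.

Lemma flip_kernel_le1 p s y : 0 <= p <= 1 -> flip_kernel p s y <= 1.
Proof.
case/andP=> p0 p1; apply: prodr_ile1 => i _; case: ifP => _; last by rewrite p0.
by rewrite subr_ge0 p1 gerBl.
Qed.

Lemma flip_kernel_half s y : flip_kernel 2^-1 s y = (2 ^ k)%:R^-1.
Proof.
rewrite natrX -exprVn -[in RHS](card_ord k) -prodr_const.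
by apply: eq_bigr => i _; case: ifP => // _; rewrite {1}(splitr 1) mul1r addrK.
Qed.

Lemma E_noisyE Q mu p : E_noisy Q mu p = \sum_s mu s * noise_op Q p s.
Proof.
rewrite /E_noisy /noisy /noise_op; under eq_bigr do rewrite mulr_suml.
rewrite exchange_big; apply: eq_bigr => s _; rewrite mulr_sumr.
by apply: eq_bigr => y _; rewrite mulrA.
Qed.

Lemma norm_noise_op_le Q p s : 0 <= p <= 1 -> `|noise_op Q p s| <= \sum_y `|Q y|.
Proof.
move=> p01; apply: le_trans (ler_norm_sum _ _ _) _; apply: ler_sum => y _.
rewrite normrM ger0_norm ?flip_kernel_ge0 //.
by rewrite ler_piMl ?normr_ge0 ?flip_kernel_le1.
Qed.

Lemma E_noisy_half Q mu : \sum_s mu s = 1 -> E_noisy Q mu 2^-1 = EQ Q.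
Proof.
move=> mu1; rewrite /E_noisy /noisy /EQ mulr_sumr; apply: eq_bigr => y _.
under eq_bigr do rewrite -/(flip_kernel _ _ _) flip_kernel_half.
by rewrite -mulr_suml mu1 mul1r.
Qed.

End NoiseOperator.

Section ConstraintNoise.
Variables (R : realType) (k n : nat).
Implicit Types (Q : bstr k -> R) (x xs : {ffun 'I_n -> bool}) (p : R).

Lemma noise_op_lit Q (a : 'I_k -> 'I_n) (b : 'I_k -> bool) p xs : injective a ->
  noise_op (Q \o lit a b) p xs = noise_op Q p (lit a b xs).
Proof.
move=> inj_a; pose g v t := if xs v == t then 1 - p else p.
have g1 v : \sum_t g v t = 1.
  by rewrite big_bool /g; case: (xs v) => /=; rewrite ?subrK // addrC subrK.
transitivity (\sum_y Q y * \sum_(x : {ffun 'I_n -> bool})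
    (\prod_v g v (x v)) * \prod_i (x (a i) == b i (+) y i)%:R).
  rewrite /noise_op; under [RHS]eq_bigr do rewrite mulr_sumr.
  rewrite exchange_big /=; apply: eq_bigr => x _.
  rewrite -(sum_eq_indicator (lit a b x) Q) mulr_sumr; apply: eq_bigr => y _.
  rewrite natr_eq_ffun [_ * Q y]mulrC mulrCA; congr (_ * (_ * _)); apply: eq_bigr => i _.
  by rewrite ffunE; case: (b i); case: (x (a i)); case: (y i).
apply: eq_bigr => y _; rewrite sum_prod_ffun_marginal // mulrC; congr (_ * _).
apply: eq_bigr => i _; rewrite /g ffunE.
by case: (b i); case: (xs (a i)); case: (y i).
Qed.

Lemma noise_op_le (F : {ffun 'I_n -> bool} -> R) (v : R) p xs :
  0 <= p <= 1 -> (forall x, F x <= v) -> noise_op F p xs <= v.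
Proof.
move=> p01 le_Fv; rewrite -[leRHS]mul1r -(sum_flip_kernel p xs) mulr_suml.
by apply: ler_sum => x _; rewrite ler_wpM2l ?flip_kernel_ge0.
Qed.

End ConstraintNoise.

Definition density (R : realType) n (x : {ffun 'I_n -> bool}) : R :=
  n%:R^-1 * \sum_v (x v)%:R.

Lemma density_itv (R : realType) n (x : {ffun 'I_n -> bool}) : 0 <= density R x <= 1.
Proof.
case: n x => [|n] x; first by rewrite /density big_ord0 mulr0 lexx ler01.
rewrite /density mulr_ge0 ?invr_ge0 ?sumr_ge0 //= mulrC ler_pdivrMr ?ltr0n // mul1r.
by rewrite -[in leRHS](card_ord n.+1) -sumr_const ler_sum // => v _; rewrite lern1 leq_b1.
Qed.

Lemma sum_xorb_eq (R : nzRingType) n (x : {ffun 'I_n -> bool}) (c t : bool) :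
  \sum_v (c (+) x v == t)%:R =
  (if c == t then n%:R - \sum_v (x v)%:R else \sum_v (x v)%:R) :> R.
Proof.
have sum_neg : \sum_v (~~ x v)%:R = n%:R - \sum_v (x v)%:R :> R.
  rewrite -[X in X%:R - _](card_ord n) -sumr_const -sumrB.
  by apply: eq_bigr => v _; case: (x v); rewrite ?subrr ?subr0.
by case: c; case: t; rewrite /= -?sum_neg; apply: eq_bigr => v _; case: (x v).
Qed.

Lemma sum_ffun_lit (R : realType) k n (Q : bstr k -> R) (s : bstr k) (x : {ffun 'I_n -> bool}) :
  (0 < n)%N ->
  \sum_(a : {ffun 'I_k -> 'I_n}) Q (lit a s x) = n%:R ^+ k * noise_op Q (density R x) s.
Proof.
move=> n_gt0; have n_neq0 : n%:R != 0 :> R by rewrite pnatr_eq0 -lt0n.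
transitivity (\sum_y Q y * \sum_(a : {ffun 'I_k -> 'I_n}) \prod_i (s i (+) x (a i) == y i)%:R).
  under [RHS]eq_bigr do rewrite mulr_sumr.
  rewrite exchange_big /=; apply: eq_bigr => a _.
  rewrite -(sum_eq_indicator (lit a s x) Q); apply: eq_bigr => y _.
  by rewrite mulrC natr_eq_ffun; congr (_ * _); apply: eq_bigr => i _; rewrite ffunE.
rewrite /noise_op mulr_sumr; apply: eq_bigr => y _.
rewrite -(bigA_distr_bigA (fun i v => (s i (+) x v == y i)%:R)) /=.
rewrite mulrC mulrA; congr (_ * _).
rewrite -[in n%:R ^+ k](card_ord k) -prodr_const -big_split /=.
apply: eq_bigr => i _; rewrite sum_xorb_eq /density; case: ifP => _.
  by rewrite mulrBr mulr1 mulrA divff // mul1r.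
by rewrite mulrA divff // mul1r.
Qed.

Lemma sum_inj_lit_le (R : realType) k n (Q : bstr k -> R) (s : bstr k)
    (x : {ffun 'I_n -> bool}) : (0 < n)%N -> (k <= n)%N ->
  \sum_(a : {ffun 'I_k -> 'I_n} | injectiveb a) Q (lit a s x) <=
  (n ^_ k)%:R * (noise_op Q (density R x) s + 2 * (\sum_y `|Q y|) * ((k * k)%:R / n%:R)).
Proof.
move=> n_gt0 le_kn; set B := \sum_y `|Q y|.
have le_B y : `|Q y| <= B by rewrite /B (bigD1 y) //= lerDl sumr_ge0.
have := @sum_sub_le_mean R _ [pred a : {ffun 'I_k -> 'I_n} | injectiveb a]
  (fun a => Q (lit a s x)) B _ (fun a => le_B _).
rewrite card_inj_ffun_ord card_ffun !card_ord sum_ffun_lit // -natrX.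
have ffact_pos : (0 < n ^_ k)%N by rewrite ffact_gt0.
rewrite mulKf ?pnatr_eq0 -?lt0n ?expn_gt0 ?n_gt0 // => /(_ ffact_pos) /le_trans; apply.
rewrite ler_wpM2l // lerD2l ler_wpM2l ?mulr_ge0 ?sumr_ge0 //.
by rewrite natrX birthday_bound.
Qed.

(** * Distributions from useless instances *)

Section EmpiricalDistribution.
Variables (R : realType) (k n m : nat).
Variables (a : 'I_m -> 'I_k -> 'I_n) (b : 'I_m -> 'I_k -> bool).
Implicit Types (x : {ffun 'I_n -> bool}) (s : bstr k).

Definition empirical x s : R := m%:R^-1 * \sum_j (lit (a j) (b j) x == s)%:R.

Lemma sum_empiricalM x (F : bstr k -> R) :
  \sum_s empirical x s * F s = frac_val F a b x.
Proof.
under eq_bigr do rewrite -mulrA mulr_suml.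
rewrite -mulr_sumr exchange_big /=; congr (_ * _).
by apply: eq_bigr => j _; rewrite sum_eq_indicator.
Qed.

Lemma constraints_sat (P : bstr k -> bool) x : (0 < m)%N ->
  frac_val (fun s => (P s)%:R : R) a b x = 1 -> forall j, P (lit (a j) (b j) x).
Proof.
move=> m_gt0 /(congr1 (fun t => m%:R * t)).
rewrite mulrA divff ?pnatr_eq0 -?lt0n // mul1r mulr1 => sum_m.
have : \sum_j (1 - (P (lit (a j) (b j) x))%:R) = 0 :> R.
  by rewrite sumrB sum_m sumr_const card_ord subrr.
have ge0 j : 0 <= 1 - (P (lit (a j) (b j) x))%:R :> R.
  by case: (P _); rewrite ?subrr ?subr0.
move/(psumr_eq0P (fun j _ => ge0 j)) => all0 j; move: (all0 j isT).
by case: (P _) => //; rewrite subr0 => /eqP; rewrite oner_eq0.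
Qed.

Lemma empirical_prob_on (P : bstr k -> bool) x : (0 < m)%N ->
  frac_val (fun s => (P s)%:R : R) a b x = 1 -> prob_on P (empirical x).
Proof.
move=> m_gt0 val1; split.
- by move=> s; rewrite mulr_ge0 ?invr_ge0 ?sumr_ge0.
- under eq_bigr do rewrite -[empirical _ _]mulr1.
  by rewrite sum_empiricalM /frac_val sumr_const card_ord mulVf ?pnatr_eq0 -?lt0n.
- move=> s; have [j /eqP <- _|no_j] := pickP (fun j => lit (a j) (b j) x == s).
    exact: constraints_sat.
  by rewrite /empirical big1 ?mulr0 ?eqxx // => j _; rewrite no_j.
Qed.

Lemma E_noisy_empirical (Q : bstr k -> R) (p : R) x :
  (forall j, injective (a j)) ->
  E_noisy Q (empirical x) p = noise_op (frac_val Q a b) p x.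
Proof.
move=> inj_a; rewrite E_noisyE sum_empiricalM /frac_val.
under eq_bigr do rewrite -noise_op_lit //.
rewrite /noise_op exchange_big mulr_sumr; apply: eq_bigr => y _.
by rewrite -mulr_sumr mulrCA.
Qed.

End EmpiricalDistribution.

Arguments empirical {R k n m} a b x s.

Lemma useless_approx (R : realType) k (P : bstr k -> bool) (Q : bstr k -> R) (eps : R) :
  useless P Q -> 0 < eps ->
  exists mu, prob_on P mu /\ forall p, 0 <= p <= 1 -> E_noisy Q mu p <= EQ Q + eps.
Proof.
move=> /[apply] -[n [m [a [b [m_gt0 inj_a [[x val1] _] [v [[_ le_v] v_le]]]]]]].
exists (empirical a b x); split; first exact: empirical_prob_on.
move=> p p01; rewrite E_noisy_empirical //.
exact: le_trans (noise_op_le _ p01 le_v) v_le.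
Qed.

Section ClusterPoint.
Import ArrowAsProduct numFieldNormedType.Exports.
Local Open Scope classical_set_scope.
Variables (R : realType) (T : finType).
Implicit Types (f : nat -> T -> R) (mu W : T -> R).

Definition cluster_seq f mu := forall (e : R) (N0 : nat), 0 < e ->
  exists2 N, (N0 <= N)%N & forall t, `|f N t - mu t| < e.

Lemma unit_cube_cluster f : (forall N t, 0 <= f N t <= 1) -> exists mu, cluster_seq f mu.
Proof.
move=> f01.
have [|mu [_ mu_cl]] := @tychonoff T (fun _ => _) _ (fun _ => @segment_compact R 0 1) (f @ \oo).
  by exists 0%N => // N _ t; rewrite /= in_itv /= f01.
exists mu => e N0 e_gt0.
have near_mu : \forall g \near mu, forall t, `|g t - mu t| < e.
  have nbhs_mu : Filter (nbhs mu) by apply: nbhs_filter.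
  apply: (@filter_forall _ T (fun t g => `|g t - mu t| < e) _ nbhs_mu) => t.
  have : nbhs mu (proj t @^-1` ball (mu t) e).
    exact: (@proj_continuous _ _ t mu _ (nbhsx_ballx (mu t) e e_gt0)).
  suff -> : proj t @^-1` ball (mu t) e = (fun g => `|g t - mu t| < e) by [].
  by apply/funext => g; apply/propext; rewrite /proj -ball_normE /ball_ /= distrC.
have [|g [[N N0N ->] g_mu]] := mu_cl [set g | exists2 N, (N0 <= N)%N & g = f N] _ _ near_mu.
  by exists N0 => // N /= N0N; exists N.
by exists N.
Qed.

Lemma cluster_sum_le f mu W (c : R) : cluster_seq f mu ->
  (forall N, \sum_t f N t * W t <= c + N.+1%:R^-1) -> \sum_t mu t * W t <= c.
Proof.
move=> mu_cl le_c; apply/ler_addgt0Pr => d d_gt0.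
set B := \sum_t `|W t|; have B1_gt0 : 0 < B + 1 by rewrite ltr_wpDl ?sumr_ge0.
have e_gt0 : 0 < d / 2 / (B + 1) by rewrite !divr_gt0.
have [N N0N close] := mu_cl _ (Num.truncn (2 / d)) e_gt0.
have N_small : N.+1%:R^-1 <= d / 2.
  have : 2 / d < N.+1%:R by apply: lt_le_trans (truncnS_gt _) _; rewrite ler_nat.
  rewrite -[d / 2]invrK lef_pV2 ?posrE ?invr_gt0 ?divr_gt0 ?ltr0n // invf_div.
  exact: ltW.
have dev : \sum_t mu t * W t - \sum_t f N t * W t <= d / 2.
  rewrite -sumrB; apply: le_trans (ler_norm _) _; apply: le_trans (ler_norm_sum _ _ _) _.
  apply: (@le_trans _ _ (\sum_t d / 2 / (B + 1) * `|W t|)).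
    apply: ler_sum => t _; rewrite -mulrBl normrM ler_wpM2r // distrC.
    exact/ltW/close.
  rewrite -mulr_sumr -/B mulrAC ler_pdivrMr //.
  by rewrite ler_wpM2l ?divr_ge0 ?(ltW d_gt0) // lerDl.
move: dev; rewrite lerBlDl => /le_trans; apply.
by rewrite [in leRHS](splitr d) addrA lerD2r (le_trans (le_c N)) ?lerD2l.
Qed.

End ClusterPoint.

Lemma prob_on_itv (R : realType) k (P : bstr k -> bool) (mu : bstr k -> R) s :
  prob_on P mu -> 0 <= mu s <= 1.
Proof. by case=> mu_ge0 mu1 _; rewrite mu_ge0 -mu1 (bigD1 s) //= lerDl sumr_ge0. Qed.

Lemma prob_on_cluster (R : realType) k (P : bstr k -> bool) (f : nat -> bstr k -> R) mu :
  (forall N, prob_on P (f N)) -> cluster_seq f mu -> prob_on P mu.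
Proof.
move=> f_prob mu_cl.
have limit_le W c : (forall N, \sum_s f N s * W s <= c) -> \sum_s mu s * W s <= c.
  move=> le_c; apply: cluster_sum_le mu_cl _ => N.
  by rewrite (le_trans (le_c N)) // lerDl invr_ge0.
have sum_point (g : bstr k -> R) s sg : \sum_t g t * (sg * (t == s)%:R) = sg * g s.
  rewrite -(sum_eq_indicator s (fun t => sg * g t)).
  by apply: eq_bigr => t _; rewrite eq_sym; ring.
have point_le s sg c : (forall N, sg * f N s <= c) -> sg * mu s <= c.
  by move=> le_c; rewrite -sum_point; apply: limit_le => N; rewrite sum_point.
have sum_const (g : bstr k -> R) sg : \sum_t g t * sg = sg * \sum_t g t.
  by rewrite -mulr_suml mulrC.
split.
- move=> s; rewrite -oppr_le0 -mulN1r; apply: point_le => N.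
  by rewrite mulN1r oppr_le0; case: (f_prob N).
- have sum_le sg : \sum_s mu s * sg <= sg.
    apply: limit_le => N; case: (f_prob N) => _ f1 _.
    by rewrite sum_const f1 mulr1.
  have := sum_le 1; rewrite sum_const mul1r => le1.
  have := sum_le (-1); rewrite sum_const mulN1r lerN2 => ge1.
  by apply/eqP; rewrite eq_le le1 ge1.
- move=> s; apply: contraNT => notPs.
  have f0 N : f N s = 0.
    by apply/eqP; apply: contraNT notPs; case: (f_prob N) => _ _; apply.
  have le0 sg : sg * mu s <= 0 by apply: point_le => N; rewrite f0 mulr0.
  have := le0 (-1); rewrite mulN1r oppr_le0 => ge0.
  by rewrite eq_le ge0 -[mu s]mul1r le0.
Qed.

Lemma Opt_of_useless (R : realType) k (P : bstr k -> bool) (Q : bstr k -> R) :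
  useless P Q -> exists mu, prob_on P mu /\ Opt_is Q mu (EQ Q).
Proof.
move=> PQ_useless.
have /choice [f f_approx] (N : nat) : exists mu, prob_on P mu /\
    forall p, 0 <= p <= 1 -> E_noisy Q mu p <= EQ Q + N.+1%:R^-1.
  by apply: useless_approx; rewrite // invr_gt0 ltr0n.
have [mu mu_cl] := unit_cube_cluster (fun N s => prob_on_itv s (f_approx N).1).
have mu_prob := prob_on_cluster (fun N => (f_approx N).1) mu_cl.
exists mu; split => //; split.
  exists 2^-1; rewrite E_noisy_half; last by case: mu_prob.
  by rewrite invr_ge0 ler0n invf_le1 ?ltr0n ?ler1n.
move=> p p01; rewrite E_noisyE; apply: cluster_sum_le mu_cl _ => N.
by rewrite -E_noisyE (f_approx N).2.
Qed.

(** * Useless instances from distributions *)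

Section CountedInstance.
Variables (k n : nat) (C : bstr k -> nat).

Definition inst_constraints : seq (bstr k * {ffun 'I_k -> 'I_n}) :=
  [seq (s, a) | s <- flatten [seq nseq (C s) s | s <- enum (bstr k)],
                a <- [seq a <- enum {ffun 'I_k -> 'I_n} | injectiveb (a : {ffun 'I_k -> 'I_n})]].

Local Notation m := (size inst_constraints).
Local Notation constraint j := (tnth (in_tuple inst_constraints) j).

Definition inst_signs (j : 'I_m) : 'I_k -> bool := (constraint j).1.
Definition inst_vars (j : 'I_m) : 'I_k -> 'I_n := (constraint j).2.

Lemma inst_vars_inj j : injective (inst_vars j).
Proof.
have := mem_tnth j (in_tuple inst_constraints).
by case/allpairsP=> -[s a] [_ /=]; rewrite mem_filter /inst_vars => /andP[/injectiveP ? _] ->.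
Qed.

Lemma sum_inst (R : nzRingType) (F : bstr k -> {ffun 'I_k -> 'I_n} -> R) :
  \sum_(j < m) F (constraint j).1 (constraint j).2 =
  \sum_s (C s)%:R * \sum_(a : {ffun 'I_k -> 'I_n} | injectiveb a) F s a.
Proof.
rewrite -(big_tuple _ _ (in_tuple inst_constraints) predT (fun c => F c.1 c.2)).
rewrite big_allpairs big_flatten big_map /= big_enum; apply: eq_bigr => s _.
by rewrite big_nseq iter_addr_0 mulr_natl big_filter big_enum_cond.
Qed.

Lemma frac_val_inst (R : realType) (F : bstr k -> R) x :
  frac_val F inst_vars inst_signs x =
  m%:R^-1 * \sum_s (C s)%:R * \sum_(a : {ffun 'I_k -> 'I_n} | injectiveb a) F (lit a s x).
Proof. exact: (congr1 _ (sum_inst (fun s a => F (lit a s x)))). Qed.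

Lemma size_inst (R : nzRingType) : m%:R = (\sum_s C s)%:R * (n ^_ k)%:R :> R.
Proof.
have := sum_inst (fun _ _ => 1 : R); rewrite sumr_const card_ord => ->.
rewrite natr_sum mulr_suml; apply: eq_bigr => s _.
by rewrite sumr_const -card_inj_ffun_ord mulr_natr.
Qed.
End CountedInstance.

Arguments inst_constraints {k} n C.
Arguments inst_vars {k} n C j.
Arguments inst_signs {k} n C j.

Lemma frac_val_le (R : realType) k n m (F : bstr k -> R) (a : 'I_m -> 'I_k -> 'I_n) b x c :
  (0 < m)%N -> (forall s, F s <= c) -> frac_val F a b x <= c.
Proof.
move=> m_gt0 le_c; rewrite /frac_val ler_pdivrMl ?ltr0n //.
by rewrite -[X in X%:R * c](card_ord m) mulr_natl -sumr_const ler_sum.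
Qed.

Section CountedInstanceValue.
Variables (R : realType) (k n : nat) (C : bstr k -> nat).
Hypotheses (n_gt0 : (0 < n)%N) (le_kn : (k <= n)%N) (C_gt0 : (0 < \sum_s C s)%N).

Local Notation m := (size (inst_constraints n C)).

Lemma inst_size_gt0 : (0 < m)%N.
Proof. by rewrite -(ltr0n R) size_inst mulr_gt0 ?ltr0n ?ffact_gt0. Qed.

Lemma inst_satisfiable (P : bstr k -> bool) : (forall s, (0 < C s)%N -> P s) ->
  is_max_fin (frac_val (fun s => (P s)%:R : R) (inst_vars n C) (inst_signs n C)) 1.
Proof.
move=> C_P; split; last by move=> x; apply: frac_val_le inst_size_gt0 _ => s; rewrite lern1 leq_b1.
exists [ffun => false]; rewrite frac_val_inst.
have lit_false (a : {ffun 'I_k -> 'I_n}) (s : bstr k) : lit a s [ffun => false] = s.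
  by apply/ffunP => i; rewrite !ffunE addbF.
under eq_bigr do under eq_bigr do rewrite lit_false.
have -> : \sum_s (C s)%:R * \sum_(a : {ffun 'I_k -> 'I_n} | injectiveb a) ((P s)%:R : R) =
    (\sum_s C s)%:R * (n ^_ k)%:R.
  rewrite natr_sum mulr_suml; apply: eq_bigr => s _.
  have [->|/C_P ->] := posnP (C s); first by rewrite !mul0r.
  by rewrite sumr_const card_inj_ffun_ord.
by rewrite size_inst mulVf // mulf_neq0 ?pnatr_eq0 -?lt0n ?ffact_gt0.
Qed.

Lemma frac_val_inst_le (Q : bstr k -> R) x :
  frac_val Q (inst_vars n C) (inst_signs n C) x <=
  \sum_s (C s)%:R / (\sum_t C t)%:R * noise_op Q (density R x) s +
  2 * (\sum_y `|Q y|) * ((k * k)%:R / n%:R).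
Proof.
set M : R := (\sum_t C t)%:R; set I : R := (n ^_ k)%:R.
set c := 2 * (\sum_y `|Q y|) * ((k * k)%:R / n%:R).
have M_gt0 : 0 < M by rewrite ltr0n.
have I_gt0 : 0 < I by rewrite ltr0n ffact_gt0.
rewrite frac_val_inst size_inst -/M -/I.
apply: le_trans (_ : (M * I)^-1 * \sum_s (C s)%:R * (I * (noise_op Q (density R x) s + c)) <= _).
  rewrite ler_wpM2l ?invr_ge0 ?mulr_ge0 ?(ltW M_gt0) ?(ltW I_gt0) //.
  by apply: ler_sum => s _; rewrite ler_wpM2l ?sum_inj_lit_le.
set G := noise_op Q (density R x).
have -> : \sum_s (C s)%:R * (I * (G s + c)) = I * \sum_s (C s)%:R * G s + I * c * M.
  by rewrite /M natr_sum !mulr_sumr -big_split; apply: eq_bigr => s _ /=; ring.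
have -> : \sum_s (C s)%:R / M * G s = M^-1 * \sum_s (C s)%:R * G s.
  by rewrite mulr_sumr; apply: eq_bigr => s _; ring.
by rewrite le_eqVlt; apply/predU1P; left; field; rewrite !lt0r_neq0.
Qed.
End CountedInstanceValue.

Lemma useless_of_Opt (R : realType) k (P : bstr k -> bool) (Q : bstr k -> R) :
  (exists mu, prob_on P mu /\ Opt_is Q mu (EQ Q)) -> useless P Q.
Proof.
case=> mu [[mu_ge0 mu1 mu_supp] [_ Opt_le]] eps eps_gt0.
set B := \sum_y `|Q y|; have B_ge0 : 0 <= B by rewrite sumr_ge0.
have d_gt0 : 0 < eps / (2 * (B + 1)) by rewrite divr_gt0 // mulr_gt0 // ltr_wpDl.
have [C [C_supp C_gt0 C_close]] := rational_approx mu_ge0 mu1 d_gt0.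
set n := (Num.truncn (4 * B * (k * k)%:R / eps) + k).+1.
have n_gt0 : (0 < n)%N by [].
have le_kn : (k <= n)%N by rewrite ltnW // ltnS leq_addl.
have small_n : 2 * B * ((k * k)%:R / n%:R) <= eps / 2.
  have : 4 * B * (k * k)%:R / eps < n%:R.
    by apply: lt_le_trans (truncnS_gt _) _; rewrite ler_nat ltnS leq_addr.
  rewrite ltr_pdivrMr // mulrA ler_pdivrMr ?ltr0n //; nra.
exists n, (size (inst_constraints n C)), (inst_vars n C), (inst_signs n C); split.
- exact: inst_size_gt0.
- exact: inst_vars_inj.
- by apply: inst_satisfiable => // s /C_supp/mu_supp.
have [v v_max] := is_max_fin_exists (frac_val Q (inst_vars n C) (inst_signs n C)) [ffun => false].
exists v; split => //; case: v_max => [[x <-] _].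
apply: le_trans (frac_val_inst_le n_gt0 le_kn C_gt0 Q x) _.
have p01 := density_itv R x.
have approx_le := sum_mul_le_l1 B_ge0 (fun s => norm_noise_op_le Q s p01) C_close.
rewrite -[X in _ <= X + _]E_noisyE in approx_le.
apply: le_trans (lerD approx_le small_n) _.
rewrite -addrA; apply: lerD (Opt_le _ p01) _.
rewrite [leRHS]splitr lerD2r mulrAC ler_pdivrMr ?mulr_gt0 ?ltr_wpDl //.
by rewrite mulrA divfK ?pnatr_eq0 // ler_wpM2l ?(ltW eps_gt0) // lerDl.
Qed.

Unset Implicit Arguments.

Theorem theorem3p2 (R : realType) (k : nat) (P : bstr k -> bool) (Q : bstr k -> R) :
  useless P Q <->
  exists mu : bstr k -> R, prob_on P mu /\ Opt_is Q mu (EQ Q).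
Proof. by split; [exact: Opt_of_useless | exact: useless_of_Opt]. Qed.
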